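(* Let $\varphi=(\mathfrak{m}_1,\dots,\mathfrak{m}_\ell)$ be a normalizer-adapted decomposition. Fix $1\le p\le\ell_0$ and $1\le i\le\ell$. If there exists $1\le j\le\ell$ with $[pij]>0$, then $[pik]=0$ for every $k\in\{1,\dots,\ell\}\setminus\{j\}$. Consequently $\mathfrak{m}_i\simeq\mathfrak{m}_j$ as $\mathrm{Ad}(\mathsf{H})$-modules and $\mathrm{ad}(V_p)(\mathfrak{m}_i)=\mathfrak{m}_j$.
   Context: $M=\mathsf{G}/\mathsf{H}$ almost-effective, $\mathsf{G},\mathsf{H}$ compact connected; $Q$ an $\mathrm{Ad}(\mathsf{G})$-invariant inner product on $\mathfrak{g}$, $\mathfrak{m}=\mathfrak{h}^{\perp_Q}$, $\mathfrak{m}_0=\{X\in\mathfrak{m}:[\mathfrak{h},X]=0\}$. $\varphi=(\mathfrak{m}_1,\dots,\mathfrak{m}_\ell)$ is an ordered $Q$-orthogonal decomposition of $\mathfrak{m}$ into irreducible $\mathrm{Ad}(\mathsf{H})$-submodules, ordered so that $\mathfrak{m}_0=\mathfrak{m}_1+\dots+\mathfrak{m}_{\ell_0}$ with $\dim\mathfrak{m}_p=1$ for $p\le\ell_0$; $V_p\in\mathfrak{m}_p$ with $Q(V_p,V_p)=1$. $[ijk]=\sum Q([e_\alpha,e_\beta],e_\gamma)^2$ over a $Q$-orthonormal $\varphi$-adapted basis with $e_\alpha\in\mathfrak{m}_i,e_\beta\in\mathfrak{m}_j,e_\gamma\in\mathfrak{m}_k$. $\varphi$ is normalizer-adapted if for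 every $1\le p\le\ell_0$ and $1\le i\le\ell$ with $[\mathfrak{m}_p,\mathfrak{m}_i]\ne\{0\}$ there is $j$ with $[\mathfrak{m}_p,\mathfrak{m}_i]\cap\mathfrak{m}_j\neq\{0\}$. *)

(* Lie-algebra-level formalization of the setting of
   M = G/H: g = 'rV[R]_n with a Lie bracket br, an
   ad-invariant inner product Q, the isotropy subalgebra h. *)
From HB Require Import structures.
From mathcomp Require Import all_boot all_order all_algebra.
Set Implicit Arguments. Unset Strict Implicit. Unset Printing Implicit Defensive.
Import Order.TTheory GRing.Theory Num.Theory.
Local Open Scope ring_scope.

Section Defs.
Variables (R : realFieldType) (n : nat).
Local Notation V := 'rV[R]_n.
Variable br : V -> V -> V.
Variable Q : V -> V -> R.

Definition is_lie_bracket : Prop :=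
  [/\ (forall (a : R) (x y z : V), br (a *: x + y) z = a *: br x z + br y z),
      (forall x y : V, br x y = - br y x)
    & (forall x y z : V, br x (br y z) + br y (br z x) + br z (br x y) = 0)].

(* Q is an ad(g)-invariant (hence Ad(G)-invariant for connected G) inner product *)
Definition is_ad_invariant_inner_product : Prop :=
  [/\ (forall (a : R) (x y z : V), Q (a *: x + y) z = a * Q x z + Q y z),
      (forall x y : V, Q x y = Q y x),
      (forall x : V, x != 0 -> 0 < Q x x)
    & (forall x y z : V, Q (br x y) z = - Q y (br x z))].

Definition is_subalgebra (h : {vspace V}) : Prop :=
  forall x y, x \in h -> y \in h -> br x y \in h.

Definition is_ideal (I : {vspace V}) : Prop :=
  forall x y, y \in I -> br x y \in I.

Definition almost_effective (h : {vspace V}) : Prop :=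
  forall I : {vspace V}, is_ideal I -> (I <= h)%VS -> I = 0%VS.

Definition in_m (h : {vspace V}) (X : V) : Prop :=
  forall Y, Y \in h -> Q X Y = 0.

(* U is an ad(h)- (i.e. Ad(H)-, H connected) submodule *)
Definition h_invariant (h U : {vspace V}) : Prop :=
  forall Y X, Y \in h -> X \in U -> br Y X \in U.

Definition h_irreducible (h U : {vspace V}) : Prop :=
  [/\ U != 0%VS, h_invariant h U
    & forall W : {vspace V}, (W <= U)%VS -> h_invariant h W -> W = 0%VS \/ W = U].

(* phi = (m_1,...,m_ell) is a Q-orthogonal decomposition of m into
   irreducible submodules, ordered so that m_0 = m_1 + ... + m_ell0
   with dim m_p = 1 for p <= ell0 (indices shifted to start at 0) *)
Definition is_ordered_decomposition (h : {vspace V}) (ell ell0 : nat)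
  (ms : 'I_ell -> {vspace V}) : Prop :=
  [/\ (forall i X, X \in ms i -> in_m h X),
      (forall i j, i != j -> forall X Y, X \in ms i -> Y \in ms j -> Q X Y = 0),
      (h + \sum_(i < ell) ms i)%VS = fullv,
      (forall i, h_irreducible h (ms i))
    & [/\ (ell0 <= ell)%N,
      (forall p : 'I_ell, (val p < ell0)%N -> \dim (ms p) = 1%N)
    & (forall X : V, X \in (\sum_(p < ell | (val p < ell0)%N) ms p)%VS <->
         (in_m h X /\ forall Y, Y \in h -> br Y X = 0))]].

Definition adapted_orthonormal_basis (ell : nat) (ms : 'I_ell -> {vspace V})
  (e : 'I_ell -> seq V) : Prop :=
  forall i, basis_of (ms i) (e i) /\
    (forall a b, a \in e i -> b \in e i -> Q a b = (a == b)%:R).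

Definition brk (ell : nat) (e : 'I_ell -> seq V) (i j k : 'I_ell) : R :=
  \sum_(a <- e i) \sum_(b <- e j) \sum_(c <- e k) (Q (br a b) c) ^+ 2.

Definition brsp (U W : {vspace V}) : {vspace V} :=
  <<[seq br u w | u <- vbasis U, w <- vbasis W]>>%VS.

Definition normalizer_adapted (ell ell0 : nat) (ms : 'I_ell -> {vspace V}) : Prop :=
  forall p i : 'I_ell, (val p < ell0)%N -> brsp (ms p) (ms i) != 0%VS ->
    exists j : 'I_ell, (brsp (ms p) (ms i) :&: ms j)%VS != 0%VS.

Definition h_module_iso (h U W : {vspace V}) : Prop :=
  exists f : 'End(V),
    [/\ (f @: U)%VS = W, (lker f :&: U)%VS = 0%VS
      & forall Y X, Y \in h -> X \in U -> f (br Y X) = br Y (f X)].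

End Defs.

(* Since h centralizes V_p, the Jacobi identity makes ad(V_p) a morphism of
   h-modules, and [m_p, m_i] = ad(V_p)(m_i) because m_p is the line through V_p.
   If [pij] > 0 this image is nonzero, so by normalizer-adaptedness it meets some
   irreducible m_j'. Schur-type arguments (the intersection, the preimage of m_j'
   and the kernel are submodules of irreducible modules) show that ad(V_p) maps
   m_i isomorphically onto m_j'. Q-orthogonality then kills [pik] for k <> j',
   which forces j' = j. *)
From HB Require Import structures.
From mathcomp Require Import all_boot all_order all_algebra.
Import Order.TTheory GRing.Theory Num.Theory.
Local Open Scope ring_scope.
Set Implicit Arguments. Unset Strict Implicit. Unset Printing Implicit Defensive.

Section LieBracket.
Variables (R : realFieldType) (n : nat).
Local Notation V := 'rV[R]_n.
Variable br : V -> V -> V.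
Hypothesis Hbr : is_lie_bracket br.

Lemma br_linear_l z : linear (br^~ z).
Proof. by case: Hbr => linl _ _ a x y; apply: linl. Qed.

Lemma br_linear_r v : linear (br v).
Proof.
by case: Hbr => linl anti _ a x y; rewrite anti linl (anti v x) (anti v y) scalerN opprD.
Qed.

Definition ad_right z : {linear V -> V} :=
  HB.pack (br^~ z) (GRing.isLinear.Build R V V *:%R (br^~ z) (br_linear_l z)).

Definition ad_lin v : {linear V -> V} :=
  HB.pack (br v) (GRing.isLinear.Build R V V *:%R (br v) (br_linear_r v)).

Definition ad v : 'End(V) := linfun (ad_lin v).

Lemma ad_rightE z x : ad_right z x = br x z.
Proof. by []. Qed.

Lemma adE v x : ad v x = br v x.
Proof. by rewrite lfunE. Qed.

Lemma brZl a x z : br (a *: x) z = a *: br x z.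
Proof. by rewrite -!ad_rightE linearZ. Qed.

Lemma br0r z : br z 0 = 0.
Proof. by rewrite -adE linear0. Qed.

Lemma ad_commute Y v X : br Y v = 0 -> br Y (br v X) = br v (br Y X).
Proof.
case: Hbr => _ anti jacobi Yv0; have := jacobi Y v X.
rewrite Yv0 br0r addr0 (anti X Y) -!adE linearN /= => /eqP.
by rewrite subr_eq0 => /eqP.
Qed.

Lemma memv_brsp (U W : {vspace V}) u w : u \in U -> w \in W -> br u w \in brsp br U W.
Proof.
move=> uU wW; rewrite (coord_vbasis wW) -adE linear_sum; apply: memv_suml => j _.
rewrite linearZ /= adE; apply: memvZ.
rewrite (coord_vbasis uU) -ad_rightE linear_sum; apply: memv_suml => i _.
rewrite linearZ /=; apply: memvZ.
apply/memv_span/allpairsP; exists ((vbasis U)`_i, (vbasis W)`_j).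
by rewrite !mem_nth ?size_tuple.
Qed.

Lemma brsp_vline v U : brsp br <[v]> U = (ad v @: U)%VS.
Proof.
apply/eqP; rewrite eqEsubv; apply/andP; split.
  apply/span_subvP => x /allpairsP [[u w] /= [u_in w_in ->]].
  have /vlineP [c ->] := vbasis_mem u_in.
  by rewrite brZl -adE memvZ // memv_img // (vbasis_mem w_in).
by apply/subvP => _ /memv_imgP [w wU ->]; rewrite adE memv_brsp ?memv_line.
Qed.

End LieBracket.

Section HModules.
Variables (R : realFieldType) (n : nat).
Local Notation V := 'rV[R]_n.
Variables (br : V -> V -> V) (h : {vspace V}).
Hypothesis Hbr : is_lie_bracket br.

Definition h_equivariant (f : 'End(V)) : Prop :=
  forall Y X, Y \in h -> f (br Y X) = br Y (f X).

Lemma ad_h_equivariant v : (forall Y, Y \in h -> br Y v = 0) -> h_equivariant (ad Hbr v).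
Proof. by move=> hv Y X Yh; rewrite !adE (ad_commute Hbr X (hv Y Yh)). Qed.

Lemma h_invariant_cap U W :
  h_invariant br h U -> h_invariant br h W -> h_invariant br h (U :&: W).
Proof.
by move=> invU invW Y X Yh; rewrite !memv_cap => /andP [XU XW]; rewrite invU ?invW.
Qed.

Variable f : 'End(V).
Hypothesis f_equiv : h_equivariant f.

Lemma h_invariant_img U : h_invariant br h U -> h_invariant br h (f @: U).
Proof. by move=> invU Y _ Yh /memv_imgP [X XU ->]; rewrite -f_equiv // memv_img ?invU. Qed.

Lemma h_invariant_preim U : h_invariant br h U -> h_invariant br h (f @^-1: U).
Proof. by move=> invU Y X Yh; rewrite -!memv_preim f_equiv // => /invU ->. Qed.

Lemma h_invariant_lker : h_invariant br h (lker f).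
Proof. by move=> Y X Yh; rewrite !memv_ker f_equiv // => /eqP ->; rewrite br0r. Qed.

Lemma h_irreducible_eq U W : h_irreducible br h U ->
  (W <= U)%VS -> h_invariant br h W -> W != 0%VS -> W = U.
Proof. by case=> _ _ irrU WU invW; case: (irrU W WU invW) => // ->; rewrite eqxx. Qed.

Lemma limg_irreducible U U' : h_irreducible br h U -> h_irreducible br h U' ->
  (f @: U :&: U')%VS != 0%VS -> (f @: U)%VS = U'.
Proof.
move=> irrU irrU' meet_nz; have [U'_nz invU' _] := irrU'; have [_ invU _] := irrU.
have U'_sub : (U' <= f @: U)%VS.
  rewrite -(h_irreducible_eq irrU' (capvSr _ _) _ meet_nz) ?capvSl //.
  exact: h_invariant_cap (h_invariant_img invU) invU'.
have /memv_imgP [x xU fxE] := subvP U'_sub _ (memv_pick U').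
have preim_eq : (f @^-1: U' :&: U)%VS = U.
  apply: h_irreducible_eq irrU (capvSr _ _) _ _.
    exact: h_invariant_cap (h_invariant_preim invU') invU.
  apply: contra U'_nz => /eqP preim0; rewrite -vpick0 fxE.
  have : x \in (f @^-1: U' :&: U)%VS by rewrite memv_cap -memv_preim -fxE memv_pick.
  by rewrite preim0 memv0 => /eqP ->; rewrite linear0.
apply/eqP; rewrite eqEsubv U'_sub andbT; apply/subvP => _ /memv_imgP [X XU ->].
by move: XU; rewrite -preim_eq memv_cap -memv_preim => /andP [].
Qed.

Lemma lker_irreducible U : h_irreducible br h U -> (f @: U)%VS != 0%VS ->
  (lker f :&: U)%VS = 0%VS.
Proof.
move=> irrU img_nz; have [_ invU irr] := irrU.
have [//|kerU] := irr _ (capvSr _ _) (h_invariant_cap h_invariant_lker invU).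
by move: img_nz; rewrite -lkerE -kerU capvSl.
Qed.

End HModules.

Section InnerProduct.
Variables (R : realFieldType) (n : nat).
Local Notation V := 'rV[R]_n.
Variables (br : V -> V -> V) (Q : V -> V -> R).

Lemma Q0l : is_ad_invariant_inner_product br Q -> forall z, Q 0 z = 0.
Proof.
case=> linl _ _ _ z; have := linl 1 0 0 z.
by rewrite scale1r mul1r addr0 => /esym/eqP; rewrite -subr_eq0 addrK => /eqP.
Qed.

Lemma adapted_basis_mem ell (ms : 'I_ell -> {vspace V}) e i a :
  adapted_orthonormal_basis Q ms e -> a \in e i -> a \in ms i.
Proof. by move=> /(_ i) [/span_basis <- _] /memv_span. Qed.

Lemma brk_eq0 ell (ms : 'I_ell -> {vspace V}) e i j k :
  adapted_orthonormal_basis Q ms e ->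
  (forall a b c, a \in ms i -> b \in ms j -> c \in ms k -> Q (br a b) c = 0) ->
  brk br Q e i j k = 0.
Proof.
move=> basis Q0; have mem := adapted_basis_mem basis; rewrite /brk big_seq big1 // => a a_in.
rewrite big_seq big1 // => b b_in; rewrite big_seq big1 // => c c_in.
by rewrite Q0 ?mem // expr2 mulr0.
Qed.

End InnerProduct.

Lemma decomposition_centralized (R : realFieldType) (n : nat)
  (br : 'rV[R]_n -> 'rV[R]_n -> 'rV[R]_n) (Q : 'rV[R]_n -> 'rV[R]_n -> R)
  (h : {vspace 'rV[R]_n}) ell ell0 (ms : 'I_ell -> {vspace 'rV[R]_n}) p v Y :
  is_ordered_decomposition br Q h ell0 ms -> (val p < ell0)%N ->
  v \in ms p -> Y \in h -> br Y v = 0.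
Proof.
case=> _ _ _ _ [_ _ m0E] p_lt vp.
have mp_sub : (ms p <= \sum_(q | (val q < ell0)%N) ms q)%VS := sumv_sup p p_lt (subvv _).
by have /m0E [_] := subvP mp_sub _ vp; apply.
Qed.

Lemma vline_dim1 (R : fieldType) (vT : vectType R) (U : {vspace vT}) v :
  v \in U -> v != 0 -> \dim U = 1%N -> U = <[v]>%VS.
Proof.
by move=> vU v_nz dimU; apply/eqP; rewrite eq_sym eqEdim -memvE vU dim_vline v_nz dimU.
Qed.

Theorem lemma5p2 (R : realFieldType) (n : nat)
  (br : 'rV[R]_n -> 'rV[R]_n -> 'rV[R]_n) (Q : 'rV[R]_n -> 'rV[R]_n -> R)
  (h : {vspace 'rV[R]_n}) (ell ell0 : nat) (ms : 'I_ell -> {vspace 'rV[R]_n})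
  (e : 'I_ell -> seq 'rV[R]_n) (Vp : 'I_ell -> 'rV[R]_n) :
  is_lie_bracket br ->
  is_ad_invariant_inner_product br Q ->
  is_subalgebra br h ->
  almost_effective br h ->
  is_ordered_decomposition br Q h ell0 ms ->
  adapted_orthonormal_basis Q ms e ->
  (forall p : 'I_ell, (val p < ell0)%N -> Vp p \in ms p /\ Q (Vp p) (Vp p) = 1) ->
  normalizer_adapted br ell0 ms ->
  forall p i : 'I_ell, (val p < ell0)%N ->
  forall j : 'I_ell, 0 < brk br Q e p i j ->
    [/\ (forall k : 'I_ell, k != j -> brk br Q e p i k = 0),
        h_module_iso br h (ms i) (ms j)
      & (forall X, X \in ms i -> br (Vp p) X \in ms j) /\
        (forall Y, Y \in ms j -> exists2 X, X \in ms i & br (Vp p) X = Y)].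
Proof.
move=> Hbr HQ _ _ decomp basis HVp normal p i p_lt j pij_gt0.
have [_ orth _ irr [_ dim1 _]] := decomp; have [Vp_in Vp_unit] := HVp p p_lt.
have Vp_nz : Vp p != 0.
  by apply: contra_eq_neq Vp_unit => ->; rewrite (Q0l HQ) eq_sym oner_neq0.
have mpE := vline_dim1 Vp_in Vp_nz (dim1 p p_lt).
have f_equiv := ad_h_equivariant Hbr (fun Y => decomposition_centralized decomp p_lt Vp_in).
have bracketE : brsp br (ms p) (ms i) = (ad Hbr (Vp p) @: ms i)%VS.
  by rewrite mpE brsp_vline.
have bracket_nz : brsp br (ms p) (ms i) != 0%VS.
  apply: contraTneq pij_gt0 => bracket0.
  rewrite (brk_eq0 basis) ?ltxx // => a b c a_in b_in _.
  by have := memv_brsp Hbr a_in b_in; rewrite bracket0 memv0 => /eqP ->; rewrite (Q0l HQ).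
have [j' meet_nz] := normal p i p_lt bracket_nz.
have imgE : (ad Hbr (Vp p) @: ms i)%VS = ms j'.
  by apply: (limg_irreducible f_equiv); rewrite ?irr // -bracketE.
have vanish k : k != j' -> brk br Q e p i k = 0.
  move=> kj'; apply: brk_eq0 => // a b c a_in b_in c_in.
  have ab_in : br a b \in ms j' by rewrite -imgE -bracketE memv_brsp.
  by apply: (orth j' k) ab_in c_in; rewrite eq_sym.
have -> : j = j' by apply: contraTeq pij_gt0 => /vanish ->; rewrite ltxx.
have ker0 : (lker (ad Hbr (Vp p)) :&: ms i)%VS = 0%VS.
  by apply: (lker_irreducible Hbr f_equiv (irr i)); rewrite imgE; case: (irr j').
split; first exact: vanish.
  by exists (ad Hbr (Vp p)); split=> // Y X Yh _; exact: f_equiv.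
split=> [X X_in | Y]; first by rewrite -adE -imgE memv_img.
by rewrite -imgE => /memv_imgP [X X_in ->]; exists X; rewrite ?adE.
Qed.
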